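(* Let $M\subset[0,1)$ be measurable with $M\cap s(M)=\emptyset$ and $M\cup s(M)=[0,1)$ up to null sets, $m_0=\operatorname{Per}(\chi_M)$, and let $F\subset\mathbb{R}$, $\hat\varphi=\chi_F$, satisfy $\hat\varphi(x)=\prod_{n\ge1}m_0(x/2^n)$, i.e. $F=\bigcap_{n\ge1}2^n\operatorname{Per}(M)$. The following are equivalent: (i) $\lim_{n\to\infty}\hat\varphi(x/2^n)=1$ for a.e. $x\in\mathbb{R}$; (ii) $\bigcup_{n\ge1}2^nF=\mathbb{R}$ up to measure zero; (iii) $\lim_{n\to\infty}m_0(x/2^n)=1$ for a.e. $x\in\mathbb{R}$; (iv) $\lim_{n\to\infty}m_0(\tau_0^nx)=1$ and $\lim_{n\to\infty}m_0(\tau_1^nx)=1$ for a.e. $x\in[0,1)$; (v) for a.e. $x\in[0,1)$, the chosen paths satisfy $\omega(\tau_0^nx)=000\cdots$ and $\omega(\tau_1^nx)=111\cdots$ for all sufficiently large $n$; (vi) for a.e. $x\in[0,1)$, the set $A(x)$ contains the words $\omega_1\cdots\omega_n000\cdots$ and $\omega_1\cdots\omega_n111\cdots$ for all $n\ge0$ and all $\omega_1,\dots,\omega_n\in\{0,1\}$.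
   Context: On $[0,1)$: $\tau_0(x)=x/2$, $\tau_1(x)=(x+1)/2$, $s(x)=(x+\frac12)\bmod1$. $\operatorname{Per}(A)=\bigcup_{k\in\mathbb{Z}}(A+k)$, $\operatorname{Per}(\chi_M)(x)=\sum_k\chi_M(x+k)$. Chosen path: for (a.e.) $x\in[0,1)$ exactly one of $\tau_0x,\tau_1x$ lies in $M$; let $\omega_1$ be the digit with $\tau_{\omega_1}x\in M$ and inductively $\omega_{n+1}$ the unique digit with $\tau_{\omega_{n+1}}\tau_{\omega_n}\cdots\tau_{\omega_1}x\in M$; $\omega(x)=\omega_1\omega_2\cdots\in\{0,1\}^{\mathbb{N}}$. $A(x)=\{\eta_1\cdots\eta_n\,\omega(\tau_{\eta_n}\cdots\tau_{\eta_1}x)\mid n\ge0,\ \eta_i\in\{0,1\}\}$. *)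

From HB Require Import structures.
From mathcomp Require Import all_boot all_order all_algebra.
From mathcomp Require Import all_classical all_reals all_analysis.
Set Implicit Arguments. Unset Strict Implicit. Unset Printing Implicit Defensive.
Import Order.TTheory GRing.Theory Num.Theory.
Local Open Scope classical_set_scope.
Local Open Scope ring_scope.

Section Defs.
Variable R : realType.

(* tau_b x = (x + b)/2, b in {0,1}; digits are booleans, false = 0, true = 1 *)
Definition tau (b : bool) (x : R) : R := (x + (b : nat)%:R) / 2.
Definition tau0 : R -> R := tau false.
Definition tau1 : R -> R := tau true.

Definition shalf (x : R) : R :=
  (x + 2^-1) - (Num.floor (x + 2^-1))%:~R.

Definition Per (A : set R) : set R :=
  \bigcup_(k in [set: int]) [set y + k%:~R | y in A].

Definition Per_fun (M : set R) (x : R) : \bar R :=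
  (\esum_(k in [set: int]) ((\1_M (x + k%:~R) : R)%:E))%E.

Definition dil (c : R) (A : set R) : set R := [set c * y | y in A].

Definition Fset (M : set R) : set R :=
  \bigcap_(n in [set n : nat | (0 < n)%N]) dil (2 ^+ n) (Per M).

Definition phihat (M : set R) : R -> R := \1_(Fset M).

(* The chosen digit at y: the digit b with tau_b y in M
   (the unique one for a.e. y; ties are broken towards 1). *)
Definition chosen_digit (M : set R) (y : R) : bool := ~~ `[< M (tau0 y) >].

Fixpoint path_state (M : set R) (x : R) (n : nat) : R :=
  match n with
  | 0 => x
  | n.+1 => let y := path_state M x n in tau (chosen_digit M y) y
  end.

(* omega(x) = omega_1 omega_2 ...; (omega M x) n is omega_{n+1} *)
Definition omega (M : set R) (x : R) : nat -> bool :=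
  fun n => chosen_digit M (path_state M x n).

Definition wcat (eta : seq bool) (w : nat -> bool) : nat -> bool :=
  fun k => if (k < size eta)%N then nth false eta k else w (k - size eta)%N.

Definition tau_word (eta : seq bool) (x : R) : R :=
  foldl (fun y b => tau b y) x eta.

Definition Aset (M : set R) (x : R) : set (nat -> bool) :=
  [set wcat eta (omega M (tau_word eta x)) | eta in [set: seq bool]].

End Defs.

Arguments tau {R}. Arguments tau0 {R}. Arguments tau1 {R}. Arguments shalf {R}.

From HB Require Import structures.
From mathcomp Require Import all_boot all_order all_algebra.
From mathcomp Require Import all_classical all_reals all_analysis.
From mathcomp Require Import ring lra zify.

(* All six conditions say, up to null sets, that the dyadic contractions x/2^n
   of x eventually lie in Per(M). For (i)-(iii) this is pointwise: F is the set
   of y with y/2^n in Per(M) for all n >= 1, and m0 is the indicator of Per(M)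
   because M meets every coset x + Z at most once. For (iv), tau0^n x = x/2^n
   and tau1^n x - 1 = (x-1)/2^n; since every real is 2^k times a point of
   [-1,1) and affine maps preserve Lebesgue-null sets, it is enough to ask this
   at x and x - 1 for x in [0,1). For (v), on [0,1) Per(M) = M; the chosen path
   of tau0^n y is 000... iff tau0^k y lies in M for all k > n, and that of
   tau1^n y is 111... iff tau0 tau1^k y avoids M, i.e. tau1^(k+1) y lies in M,
   for all k >= n, which uses that M and s(M) tile [0,1) off a null set.
   Finally A(x) contains eta 0^oo and eta 1^oo iff the chosen path at tau_eta x
   ends in 0^oo resp. 1^oo, and (v) holds at tau_eta x for all of the countably
   many words eta. *)

Set Implicit Arguments.
Unset Strict Implicit.
Unset Printing Implicit Defensive.
Import Order.TTheory GRing.Theory Num.Theory.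
Import numFieldNormedType.Exports.
Local Open Scope classical_set_scope.
Local Open Scope ring_scope.

(* Instance resolution does not find the a.e. filter of Lebesgue measure through
   the library's generic hint, so filter lemmas need it supplied here. *)
#[local] Instance ae_lebesgue_filter (R : realType) :
  Filter (nbhs (almost_everywhere (@lebesgue_measure R))) :=
  ae_filter_ringOfSetsType _.

Section affine_preimage.
Variables (R : realType) (a b : R).
Hypothesis a_gt0 : 0 < a.
Local Notation leb := (@lebesgue_measure R).

Let affine (x : measurableTypeR R) : measurableTypeR R := a * x + b.

Let measurable_affine : measurable_fun [set: measurableTypeR R] affine.
Proof.
apply: measurable_realfun.continuous_measurable_fun => x.
by apply: continuousD; [apply: continuousM; [exact: cvg_cst|exact: cvg_id]|exact: cvg_cst].
Qed.

(* The pushforward is a measure only given [measurable_affine], hence the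
   explicit instance name. *)
Let scaled_pushforward := mscale (NngNum (ltW a_gt0))
  (measure_function_pushforward__canonical__measure_function_Measure leb measurable_affine).

Let scaled_pushforward_itv (X : set R) : ocitv X -> leb X = scaled_pushforward X.
Proof.
move=> [[c d] _ <-]; rewrite /scaled_pushforward /mscale /= /pushforward.
have -> : affine @^-1` `]c, d]%classic = `](c - b) / a, (d - b) / a]%classic.
  apply/seteqP; split => x; rewrite /= /affine !in_itv /=.
  - by rewrite ltr_pdivrMr // ler_pdivlMr // ltrBlDr lerBrDr !(mulrC x).
  - by rewrite ltr_pdivrMr // ler_pdivlMr // ltrBlDr lerBrDr !(mulrC x).
rewrite !lebesgue_measure_itv /= !lte_fin ltr_pM2r ?invr_gt0 // ltrD2r.
case: ifP => _; last by rewrite mule0.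
by rewrite -!EFinD -EFinM; congr (_%:E); field; rewrite gt_eqF.
Qed.

Lemma lebesgue_measure_affine_preimage (A : set R) : measurable A ->
  (a%:E * leb [set x | A (a * x + b)%R] = leb A)%E.
Proof. by move=> mA; rewrite (lebesgue_measure_unique scaled_pushforward_itv mA). Qed.

Lemma ae_affine (P : R -> Prop) :
  {ae leb, forall x, P x} -> {ae leb, forall x, P (a * x + b)}.
Proof.
move=> [A [mA A0 NA]]; exists [set x | A (a * x + b)]; split.
- by rewrite -[X in measurable X]setTI; exact: measurable_affine.
- apply/eqP; move: (lebesgue_measure_affine_preimage mA).
  by rewrite A0 => /eqP; rewrite mule_eq0 eqe gt_eqF.
- by move=> x /NA.
Qed.
End affine_preimage.

Section eventually_nat.

Lemma near_inftyDr (P : nat -> Prop) (k : nat) :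
  (\forall n \near \oo, P (n + k)%N) <-> \forall n \near \oo, P n.
Proof.
split=> [[N _ PN]|PF]; last exact: (cvg_addnr k) PF.
exists (N + k)%N => // n /= Nn; have -> : n = (n - k + k)%N by lia.
by apply: PN => /=; lia.
Qed.

Variable R : realType.

Lemma cvg_indic1 (T : Type) (A : set T) (u : nat -> T) :
  (fun n => \1_A (u n) : R) @ \oo --> (1 : R) <-> \forall n \near \oo, A (u n).
Proof.
split=> [/cvgrPdist_lt/(_ 1 ltr01)|uA]; last first.
  by apply: cvg_near_cst; apply: filterS uA => n /mem_set; rewrite indicE => ->.
apply: filterS => n; rewrite indicE; case: (boolP (u n \in A)) => [/set_mem//|_].
by rewrite subr0 normr1 ltxx.
Qed.

Lemma cvge_indic1 (T : Type) (A : set T) (u : nat -> T) :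
  (fun n => (\1_A (u n) : R)%:E) @ \oo --> 1%E <-> \forall n \near \oo, A (u n).
Proof.
rewrite fine_cvgP; split=> [[_ /cvg_indic1]//|/cvg_indic1 cvgA].
by split; first exact: nearW.
Qed.

End eventually_nat.

Section periodization.
Variables (R : realType) (M : set R).

Lemma PerP z : Per M z <-> exists k : int, M (z - k%:~R).
Proof.
split=> [[k _ [y My <-]]|[k Mk]]; first by exists k; rewrite addrK.
by exists k => //; exists (z - k%:~R); rewrite ?subrK.
Qed.

Lemma Per_addz z (k : int) : Per M (z + k%:~R) <-> Per M z.
Proof.
rewrite !PerP; split=> -[j Mj].
- by exists (j - k); move: Mj; congr M; rewrite intrB; ring.
- by exists (j + k); move: Mj; congr M; rewrite intrD; ring.
Qed.

Hypothesis M01 : M `<=` `[0, 1[.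

Let int_eq0 (k : int) : -1 < k%:~R :> R -> k%:~R < 1 :> R -> k = 0.
Proof.
move=> kgtN1 klt1; have : (k < 1)%R by rewrite -(ltrz1 R).
have : (-1 < k)%R by rewrite -(ltr_int R) (_ : (-1)%:~R = -1 :> R) // mulrN1z.
lia.
Qed.

Let M_bounds y : M y -> 0 <= y < 1.
Proof. by move/M01; rewrite /= in_itv. Qed.

Lemma Per_itv01 z : 0 <= z < 1 -> Per M z <-> M z.
Proof.
move=> /andP[z0 z1]; rewrite PerP; split=> [[k Mk]|Mz]; last by exists 0; rewrite subr0.
have /andP[? ?] := M_bounds Mk; suff k0 : k = 0 by rewrite k0 subr0 in Mk.
by apply: int_eq0; lra.
Qed.

Lemma Per_funE x : Per_fun M x = (\1_(Per M) x)%:E.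
Proof.
rewrite /Per_fun indicE; have [/PerP[k Mk]|nPx] := pselect (Per M x).
- rewrite mem_set; last by apply/PerP; exists k.
  rewrite (esumID [set - k]); last by move=> i _; rewrite lee_fin.
  rewrite setTI esum_set1 ?lee_fin // esum1 ?adde0; first by rewrite indicE mem_set // intrN.
  move=> i [_ /= ik]; rewrite indicE memNset //= => Mi; apply: ik.
  have /andP[? ?] := M_bounds Mk; have /andP[? ?] := M_bounds Mi.
  by apply/eqP; rewrite -subr_eq0 opprK; apply/eqP/int_eq0; rewrite intrD; lra.
- rewrite memNset // esum1 // => i _; rewrite indicE memNset //= => Mi.
  by apply: nPx; apply/PerP; exists (- i); rewrite intrN opprK.
Qed.

End periodization.

Section dyadic.
Variable R : realType.
Local Notation leb := (@lebesgue_measure R).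

Definition eventually_halved (A : set R) : set R :=
  [set x | \forall n \near \oo, A (x / 2 ^+ n)].

Let divX2D (x : R) m k : x / 2 ^+ m / 2 ^+ k = x / 2 ^+ (m + k).
Proof. by rewrite exprD invfM mulrA. Qed.

Lemma eventually_halved_div (A : set R) x k :
  eventually_halved A (x / 2 ^+ k) <-> eventually_halved A x.
Proof.
rewrite /eventually_halved /= -(near_inftyDr (fun n => A (x / 2 ^+ n)) k).
by split; apply: filterS => n; rewrite divX2D addnC.
Qed.

Let halved_into_unit_itv (x : R) :
  exists k, 0 <= x / 2 ^+ k < 1 \/ 0 <= x / 2 ^+ k + 1 < 1.
Proof.
pose k := Num.bound `|x|; exists k.
have k_gt0 : (0 : R) < 2 ^+ k by rewrite exprn_gt0.
have xk : `|x| < 2 ^+ k.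
  apply: lt_le_trans (archi_boundP (normr_ge0 x)) _.
  by rewrite -natrX ler_nat ltnW // ltn_expl.
have : `|x / 2 ^+ k| < 1.
  by rewrite normrM [`|_^-1|]gtr0_norm ?invr_gt0 // ltr_pdivrMr // mul1r.
by rewrite ltr_norml; have [?|?] := leP 0 (x / 2 ^+ k); [left|right]; lra.
Qed.

Lemma ae_eventually_halvedE (A : set R) :
  {ae leb, forall x : R, eventually_halved A x} <->
  {ae leb, forall x : R, `[0, 1[%classic x ->
     eventually_halved A x /\ eventually_halved A (x - 1)}.
Proof.
pose Q y := `[0, 1[%classic y -> eventually_halved A y /\ eventually_halved A (y - 1).
split=> [EA|EQ].
  have EA1 : {ae leb, forall x : R, eventually_halved A (1 * x + -1)} by exact: ae_affine.
  by apply: (filterS2 _ _ EA EA1) => x ? + _; rewrite mul1r.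
have halfpow_gt0 k : 0 < (2 ^+ k)^-1 :> R by rewrite invr_gt0 exprn_gt0.
have : {ae leb, forall x : R, forall k, Q ((2 ^+ k)^-1 * x + 0) /\ Q ((2 ^+ k)^-1 * x + 1)}.
  apply: ae_foralln => k.
  by apply: (filterS2 _ _ (ae_affine 0 (halfpow_gt0 k) EQ)
    (ae_affine 1 (halfpow_gt0 k) EQ)).
apply: filterS => x Ex; have [k x01] := halved_into_unit_itv x.
apply/(eventually_halved_div _ _ k); have [] := Ex k; rewrite /Q addr0 !(mulrC _ x).
case: x01 => x01 Q0 Q1.
- by apply: (Q0 _).1; rewrite /= in_itv.
- by rewrite addrK in Q1; apply: (Q1 _).2; rewrite /= in_itv.
Qed.

Variable M : set R.

Lemma FsetP y : Fset M y <-> forall n, (0 < n)%N -> Per M (y / 2 ^+ n).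
Proof.
have exp2_neq0 n : 2 ^+ n != 0 :> R by rewrite expf_neq0.
split=> [Fy n n_gt0|PerF n n_gt0].
  by have [z Pz <-] := Fy n n_gt0; rewrite [2 ^+ n * z]mulrC mulfK.
by exists (y / 2 ^+ n); [exact: PerF | rewrite mulrC divfK].
Qed.

Lemma eventually_halved_Fset :
  eventually_halved (Fset M) = eventually_halved (Per M).
Proof.
apply/seteqP; split=> x [N _ EN].
  exists N.+1 => // n /= Nn; have /FsetP/(_ (n - N)%N) := EN N (leqnn N).
  by rewrite divX2D subnKC ?(ltnW Nn) //; apply; rewrite subn_gt0.
exists N => // m /= Nm; apply/FsetP => k k_gt0.
by rewrite divX2D; apply: EN; rewrite /=; lia.
Qed.

Lemma bigcup_dil_Fset :
  \bigcup_(n in [set n : nat | (0 < n)%N]) dil (2 ^+ n) (Fset M) = eventually_halved (Per M).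
Proof.
have exp2_neq0 n : 2 ^+ n != 0 :> R by rewrite expf_neq0.
apply/seteqP; split=> x.
  move=> [n _ [y /FsetP Fy <-]]; exists n.+1 => // m /= nm.
  rewrite -(subnKC (ltnW nm)) -divX2D [2 ^+ n * y]mulrC mulfK //.
  by apply: Fy; rewrite subn_gt0.
move=> [N _ EN]; exists N.+1 => //; exists (x / 2 ^+ N.+1); last by rewrite mulrC divfK.
by apply/FsetP => k _; rewrite divX2D; apply: EN; rewrite /=; lia.
Qed.

End dyadic.

Section contractions.
Variable R : realType.
Local Notation leb := (@lebesgue_measure R).

Lemma itv01P (x : R) : `[0, 1[%classic x <-> 0 <= x < 1.
Proof. by rewrite /= in_itv. Qed.

Lemma iter_tau0 n (x : R) : iter n tau0 x = x / 2 ^+ n.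
Proof.
elim: n => [|n IH]; first by rewrite expr0 divr1.
by rewrite iterS IH /tau0 /tau /= addr0 exprS invfM mulrCA mulrC.
Qed.

Lemma iter_tau1 n (x : R) : iter n tau1 x = (x - 1) / 2 ^+ n + 1.
Proof.
elim: n => [|n IH]; first by rewrite expr0 divr1 subrK.
by rewrite iterS IH /tau1 /tau /= exprS invfM; field.
Qed.

Lemma tau_itv01 b (x : R) : 0 <= x < 1 -> 0 <= tau b x < 1.
Proof. by case: b; rewrite /tau /=; lra. Qed.

Lemma iter_tau_itv01 b n (x : R) : 0 <= x < 1 -> 0 <= iter n (tau b) x < 1.
Proof. by move=> x01; elim: n => [//|n IH]; rewrite iterS; exact: tau_itv01. Qed.

Lemma tau_word_cat u v (x : R) : tau_word (u ++ v) x = tau_word v (tau_word u x).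
Proof. exact: foldl_cat. Qed.

Lemma tau_word_itv01 w (x : R) : 0 <= x < 1 -> 0 <= tau_word w x < 1.
Proof.
move=> x01; elim/last_ind: w => [//|w b IH].
by rewrite -cats1 tau_word_cat; exact: tau_itv01.
Qed.

Lemma tau_word_nseq n b (x : R) : tau_word (nseq n b) x = iter n (tau b) x.
Proof.
by elim: n => [//|n IH]; rewrite -addn1 nseqD tau_word_cat IH addn1 iterS.
Qed.

Lemma tau_wordE w (x : R) : tau_word w x = x / 2 ^+ size w + tau_word w 0.
Proof.
elim/last_ind: w => [|w b IH]; first by rewrite expr0 divr1 addr0.
rewrite -cats1 !tau_word_cat IH size_cat addn1 /= /tau exprS invfM.
by field; rewrite expf_neq0.
Qed.

Lemma ae_tau_word (P : R -> Prop) :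
  {ae leb, forall x : R, P x} -> {ae leb, forall x : R, forall w, P (tau_word w x)}.
Proof.
move=> aeP; pose word k : seq bool := odflt [::] (unpickle k).
have : {ae leb, forall x : R, forall k, P (tau_word (word k) x)}.
  apply: ae_foralln => k.
  have pow_gt0 : 0 < (2 ^+ size (word k))^-1 :> R by rewrite invr_gt0 exprn_gt0.
  apply: filterS (ae_affine (tau_word (word k) 0) pow_gt0 aeP) => x.
  by rewrite [tau_word _ x]tau_wordE mulrC.
by apply: filterS => x Px w; have := Px (pickle w); rewrite /word pickleK.
Qed.

End contractions.

Lemma wcat_nil (w : nat -> bool) : wcat [::] w = w.
Proof. by apply/funext => k; rewrite /wcat subn0. Qed.

Lemma wcat_cat_nseq (eta : seq bool) n b :
  wcat (eta ++ nseq n b) (fun _ => b) = wcat eta (fun _ => b).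
Proof.
apply/funext => k; rewrite /wcat size_cat size_nseq nth_cat.
case: (ltnP k (size eta)) => [k_lt|k_ge]; first by rewrite ltn_addr.
by case: ifP => // k_lt; rewrite nth_nseq ifT //; lia.
Qed.

Lemma wcat_eq_const (eta : seq bool) w b : wcat eta w = (fun _ => b) ->
  eta = nseq (size eta) b /\ w = (fun _ => b).
Proof.
move=> eta_w_b; split.
  apply/(@eq_from_nth _ false); rewrite ?size_nseq // => k k_lt.
  by rewrite nth_nseq k_lt; have := congr1 (fun u => u k) eta_w_b; rewrite /wcat k_lt.
apply/funext => k; have := congr1 (fun u => u (k + size eta)%N) eta_w_b.
by rewrite /wcat ltnNge leq_addl addnK.
Qed.

Section chosen_path.
Variables (R : realType) (M : set R).

Lemma chosen_digit_false y : chosen_digit M y = false <-> M (tau0 y).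
Proof. by rewrite /chosen_digit; case: asboolP. Qed.

Lemma chosen_digit_true y : chosen_digit M y = true <-> ~ M (tau0 y).
Proof. by rewrite /chosen_digit; case: asboolP. Qed.

Lemma omegaS x n : omega M x n.+1 = omega M (tau (chosen_digit M x) x) n.
Proof.
rewrite /omega; congr chosen_digit.
by elim: n x => [//|n IH] x; rewrite /= -IH.
Qed.

Lemma omega_constP b y :
  omega M y = (fun _ => b) <-> forall k, chosen_digit M (iter k (tau b) y) = b.
Proof.
split=> [omega_b k|chosen_b].
  elim: k y omega_b => [|k IH] y omega_b; first exact: (congr1 (fun w => w 0%N) omega_b).
  have y_b : chosen_digit M y = b by exact: (congr1 (fun w => w 0%N) omega_b).
  rewrite iterSr; apply: IH; apply/funext => n.
  by rewrite -y_b -omegaS omega_b.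
apply/funext => n; elim: n y chosen_b => [|n IH] y chosen_b; first exact: (chosen_b 0%N).
by rewrite omegaS (chosen_b 0%N); apply: IH => k; rewrite -iterSr.
Qed.

Lemma omega_eventually_constP b y :
  (exists N, forall n, (N <= n)%N -> omega M (iter n (tau b) y) = (fun _ => b)) <->
  \forall n \near \oo, chosen_digit M (iter n (tau b) y) = b.
Proof.
split=> [[N omega_b]|[N _ chosen_b]].
  by exists N => // n /= Nn; exact: (congr1 (fun w => w 0%N) (omega_b n Nn)).
exists N => n Nn; apply/omega_constP => k; rewrite -iterD.
by apply: chosen_b; rewrite /= (leq_trans Nn) ?leq_addl.
Qed.

Lemma Aset_wcat_const b x eta N :
  omega M (iter N (tau b) (tau_word eta x)) = (fun _ => b) ->
  Aset M x (wcat eta (fun _ => b)).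
Proof.
move=> omega_b; exists (eta ++ nseq N b) => //.
by rewrite tau_word_cat tau_word_nseq omega_b wcat_cat_nseq.
Qed.

Lemma Aset_const_omega b x : Aset M x (fun _ => b) ->
  exists N, forall n, (N <= n)%N -> omega M (iter n (tau b) x) = (fun _ => b).
Proof.
move=> [eta _ /wcat_eq_const[eta_b omega_b]]; apply/omega_eventually_constP.
exists (size eta) => // n /= eta_n; rewrite -(subnK eta_n) iterD.
rewrite -[iter (size eta) _ x]tau_word_nseq -eta_b.
by move/omega_constP : omega_b; apply.
Qed.

End chosen_path.

Section tiling.
Variables (R : realType) (M : set R).

Definition tiling_defect : set R :=
  (M `&` shalf @` M) `|` (`[0, 1[ `\` (M `|` shalf @` M)).

Hypothesis M01 : M `<=` `[0, 1[.

Lemma shalfE_lt (m : R) : 0 <= m < 2^-1 -> shalf m = m + 2^-1.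
Proof.
move=> /andP[m_ge0 m_lt]; rewrite /shalf (@floor_def _ _ 0) ?subr0 //=.
by apply/andP; split; lra.
Qed.

Lemma shalfE_ge (m : R) : 2^-1 <= m < 1 -> shalf m = m - 2^-1.
Proof.
move=> /andP[m_ge m_lt1]; rewrite /shalf (@floor_def _ _ 1) /=.
  by rewrite (_ : 1%:~R = 1 :> R) //; lra.
by apply/andP; split; lra.
Qed.

Lemma image_shalfP z : 0 <= z < 2^-1 -> (shalf @` M) z <-> M (z + 2^-1).
Proof.
move=> /andP[z_ge0 z_lt]; split=> [[m Mm mz]|Mz].
  subst z; have := M01 Mm; rewrite /= in_itv /= => /andP[m_ge0 m_lt1].
  have [m_lt|m_ge] := ltP m 2^-1.
    by move: z_lt; rewrite shalfE_lt ?m_ge0 //; lra.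
  by rewrite shalfE_ge ?m_ge // subrK.
by exists (z + 2^-1); rewrite // shalfE_ge ?addrK //; apply/andP; split; lra.
Qed.

Lemma notM_iff_M_add_half z : 0 <= z < 2^-1 -> ~ tiling_defect z ->
  ~ M z <-> M (z + 2^-1).
Proof.
move=> z01 no_defect; have /andP[z_ge0 z_lt] := z01; split=> [notMz|Mzh Mz].
  apply/(image_shalfP z01); apply: contrapT => notsMz.
  apply: no_defect; right; split.
    by rewrite /= in_itv /=; lra.
  by case.
by apply: no_defect; left; split; last exact/(image_shalfP z01).
Qed.

End tiling.

Section conditions.
Variables (R : realType) (M : set R).
Local Notation leb := (@lebesgue_measure R).

Lemma ae_phihat_cvgE :
  {ae leb, forall x : R, (fun n : nat => phihat M (x / 2 ^+ n)) @ \oo --> (1 : R)} <->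
  {ae leb, forall x : R, eventually_halved (Per M) x}.
Proof. by rewrite -eventually_halved_Fset; split; apply: filterS => x /cvg_indic1. Qed.

Hypothesis M01 : M `<=` `[0, 1[.

Let Per_fun_cvg1 (u : nat -> R) :
  (fun n => Per_fun M (u n)) @ \oo --> 1%E <-> \forall n \near \oo, Per M (u n).
Proof.
have -> : (fun n => Per_fun M (u n)) = (fun n => (\1_(Per M) (u n))%:E).
  by apply/funext => n; rewrite Per_funE.
exact: cvge_indic1.
Qed.

Lemma ae_Per_fun_cvgE :
  {ae leb, forall x : R, (fun n : nat => Per_fun M (x / 2 ^+ n)) @ \oo --> 1%E} <->
  {ae leb, forall x : R, eventually_halved (Per M) x}.
Proof. by split; apply: filterS => x /Per_fun_cvg1. Qed.

Let Per_fun_iter_tau0 x :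
  (fun n => Per_fun M (iter n (@tau0 R) x)) @ \oo --> 1%E <-> eventually_halved (Per M) x.
Proof. by rewrite Per_fun_cvg1; split; apply: filterS => n; rewrite iter_tau0. Qed.

Let Per_fun_iter_tau1 x :
  (fun n => Per_fun M (iter n (@tau1 R) x)) @ \oo --> 1%E <-> eventually_halved (Per M) (x - 1).
Proof.
rewrite Per_fun_cvg1.
by split; apply: filterS => n; rewrite iter_tau1 => /(@Per_addz R M _ 1).
Qed.

Lemma ae_Per_fun_iter_tau_cvgE :
  {ae leb, forall x : R, `[0, 1[%classic x ->
     (fun n : nat => Per_fun M (iter n (@tau0 R) x)) @ \oo --> 1%E /\
     (fun n : nat => Per_fun M (iter n (@tau1 R) x)) @ \oo --> 1%E} <->
  {ae leb, forall x : R, `[0, 1[%classic x ->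
     eventually_halved (Per M) x /\ eventually_halved (Per M) (x - 1)}.
Proof.
by split; apply: filterS => x Hx /Hx; rewrite Per_fun_iter_tau0 Per_fun_iter_tau1.
Qed.

Let omega_iter_tau0 x : 0 <= x < 1 ->
  (exists N, forall n, (N <= n)%N -> omega M (iter n (@tau0 R) x) = (fun _ => false)) <->
  eventually_halved (Per M) x.
Proof.
move=> x01.
have digitE n : chosen_digit M (iter n tau0 x) = false <-> Per M (x / 2 ^+ (n + 1)).
  by rewrite chosen_digit_false addn1 -iter_tau0 (Per_itv01 M01) ?iter_tau_itv01.
rewrite omega_eventually_constP (eq_near digitE).
exact: (near_inftyDr (fun n => Per M (x / 2 ^+ n))).
Qed.

Let omega_iter_tau1 x : 0 <= x < 1 -> (forall w, ~ tiling_defect M (tau_word w x)) ->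
  (exists N, forall n, (N <= n)%N -> omega M (iter n (@tau1 R) x) = (fun _ => true)) <->
  eventually_halved (Per M) (x - 1).
Proof.
move=> x01 no_defect.
(* Digit 1 at y means that tau0 y is not in M; off the tiling defect this says
   that tau0 y + 1/2 = tau1 y is in M. *)
have digitE n : chosen_digit M (iter n tau1 x) = true <-> Per M ((x - 1) / 2 ^+ (n + 1)).
  set y := iter n tau1 x; have y01 : 0 <= y < 1 by exact: iter_tau_itv01.
  have z01 : 0 <= tau0 y < 2^-1 by move: y01; rewrite /tau0 /tau /= addr0; lra.
  have defect_free : ~ tiling_defect M (tau0 y).
    have := no_defect (rcons (nseq n true) false).
    by rewrite -cats1 tau_word_cat tau_word_nseq.
  rewrite chosen_digit_true (notM_iff_M_add_half M01 z01 defect_free).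
  rewrite -(@Per_addz R M _ 1) -iter_tau1 addn1 (Per_itv01 M01) ?iter_tau_itv01 //.
  by have -> : tau0 y + 2^-1 = tau1 y by rewrite /tau0 /tau1 /tau /=; lra.
rewrite omega_eventually_constP (eq_near digitE).
exact: (near_inftyDr (fun n => Per M ((x - 1) / 2 ^+ n))).
Qed.

Hypothesis defect_null : leb.-negligible (tiling_defect M).

Lemma ae_omega_eventually_constE :
  {ae leb, forall x : R, `[0, 1[%classic x ->
     (exists N : nat, forall n : nat, (N <= n)%N ->
        omega M (iter n (@tau0 R) x) = (fun _ => false)) /\
     (exists N : nat, forall n : nat, (N <= n)%N ->
        omega M (iter n (@tau1 R) x) = (fun _ => true))} <->
  {ae leb, forall x : R, `[0, 1[%classic x ->
     eventually_halved (Per M) x /\ eventually_halved (Per M) (x - 1)}.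
Proof.
have : {ae leb, forall x : R, forall w, ~ tiling_defect M (tau_word w x)}.
  apply: (@ae_tau_word R (fun y => ~ tiling_defect M y)).
  by apply: negligibleS defect_null => x /contrapT.
move=> no_defect.
by split; apply: (filterS2 _ _ no_defect) => x nd Hx /[dup] /itv01P x01 /Hx;
  rewrite omega_iter_tau0 // omega_iter_tau1.
Qed.

End conditions.

Lemma ae_AsetE (R : realType) (M : set R) :
  {ae @lebesgue_measure R, forall x : R, `[0, 1[%classic x ->
     forall eta : seq bool,
       Aset M x (wcat eta (fun _ => false)) /\ Aset M x (wcat eta (fun _ => true))} <->
  {ae @lebesgue_measure R, forall x : R, `[0, 1[%classic x ->
     (exists N : nat, forall n : nat, (N <= n)%N ->
        omega M (iter n (@tau0 R) x) = (fun _ => false)) /\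
     (exists N : nat, forall n : nat, (N <= n)%N ->
        omega M (iter n (@tau1 R) x) = (fun _ => true))}.
Proof.
split.
  apply: filterS => x Hx /Hx /(_ [::])[].
  by rewrite !wcat_nil => /Aset_const_omega ? /Aset_const_omega.
move=> /ae_tau_word; apply: filterS => x Hx x01 eta.
have /Hx[[N0 omega0] [N1 omega1]] : `[0, 1[%classic (tau_word eta x).
  by apply/itv01P/tau_word_itv01/itv01P.
by split; apply: Aset_wcat_const; [exact: (omega0 N0) | exact: (omega1 N1)].
Qed.

Theorem proposition3p16 (R : realType) (M : set R) :
  measurable M -> M `<=` `[0, 1[%classic ->
  (@lebesgue_measure R).-negligible (M `&` shalf @` M) ->
  (@lebesgue_measure R).-negligible (`[0, 1[%classic `\` (M `|` shalf @` M)) ->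
  [<->
   (* (i) *)
   {ae @lebesgue_measure R, forall x : R,
      (fun n : nat => phihat M (x / 2 ^+ n)) @ \oo --> (1 : R)};
   (* (ii) *)
   (@lebesgue_measure R).-negligible
      (~` \bigcup_(n in [set n : nat | (0 < n)%N]) dil (2 ^+ n) (Fset M));
   (* (iii) *)
   {ae @lebesgue_measure R, forall x : R,
      (fun n : nat => Per_fun M (x / 2 ^+ n)) @ \oo --> (1%E : \bar R)};
   (* (iv) *)
   {ae @lebesgue_measure R, forall x : R, `[0, 1[%classic x ->
      (fun n : nat => Per_fun M (iter n (@tau0 R) x)) @ \oo --> (1%E : \bar R) /\
      (fun n : nat => Per_fun M (iter n (@tau1 R) x)) @ \oo --> (1%E : \bar R)};
   (* (v) *)
   {ae @lebesgue_measure R, forall x : R, `[0, 1[%classic x ->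
      (exists N : nat, forall n : nat, (N <= n)%N ->
         omega M (iter n (@tau0 R) x) = (fun _ => false)) /\
      (exists N : nat, forall n : nat, (N <= n)%N ->
         omega M (iter n (@tau1 R) x) = (fun _ => true))};
   (* (vi) *)
   {ae @lebesgue_measure R, forall x : R, `[0, 1[%classic x ->
      forall eta : seq bool,
        Aset M x (wcat eta (fun _ => false)) /\
        Aset M x (wcat eta (fun _ => true))}
  ].
Proof.
move=> _ M01 overlap_null gap_null.
have defect_null : (@lebesgue_measure R).-negligible (tiling_defect M).
  exact: negligibleU.
have e1 := ae_phihat_cvgE M; have e3 := ae_Per_fun_cvgE M01.
have e4 := ae_Per_fun_iter_tau_cvgE M01.
have e5 := ae_omega_eventually_constE M01 defect_null.
have e6 := ae_AsetE M; have e01 := ae_eventually_halvedE (Per M).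
rewrite bigcup_dil_Fset; tfae.
- by move/e1.
- by move=> ?; apply/e3.
- by move/e3/e01/e4.
- by move/e4/e5.
- by move/e6.
- by move/e6/e5/e01/e1.
Qed.
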